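(* In the Poisson mining model of the context, call a block a lagger if no other block is mined during $(t_j-\Delta,t_j]$ where $t_j$ is its mining time, and a tailgater otherwise. Relabel every tailgater mined by an honest node as adversarial, so that the honest blocks are exactly the laggers mined by honest nodes. Then (i) the blocks are independently honest with probability $p=\rho e^{-\lambda\Delta}$ and adversarial with probability $1-p$; and (ii) every honest block is received by all honest nodes before the next honest block is mined, so that all honest blocks lie at distinct heights and every honest block mined after any time $\tau$ is higher than every honest block mined by time $\tau$.
   Context: Blocks are mined according to a homogeneous Poisson process of rate $\lambda>0$; independently, each block is mined by an honest node with probability $\rho$ and by the adversary otherwise. Block $j$ is mined at time $t_j$. An honest block mined at time $t$ extends a longest chain in its miner's view just before $t$ and is published immediately; if an honest node mines or receives a new longest chain at time $t$, all honest nodes receive it by time $t+\Delta$, with $\Delta\ge0$. *)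

From HB Require Import structures.
From mathcomp Require Import all_boot all_order all_algebra.
From mathcomp Require Import all_classical all_reals all_analysis.
Set Implicit Arguments. Unset Strict Implicit. Unset Printing Implicit Defensive.
Import Order.TTheory GRing.Theory Num.Theory.
Local Open Scope classical_set_scope.
Local Open Scope ring_scope.

(* Mining time of block j (j = 0,1,2,...): sum of the first j+1 inter-arrival times. *)
Definition mining_time (T : Type) (R : realType) (X : nat -> T -> R) (j : nat) (w : T) : R :=
  \sum_(i < j.+1) X i w.

(* Block j is a lagger if no other block (including the genesis block, mined at
   time 0) is mined during (t_j - Delta, t_j]. *)
Definition lagger (T : Type) (R : realType) (X : nat -> T -> R) (Delta : R) (j : nat) (w : T) : Prop :=
  let t := mining_time X in
  ~ (t j w - Delta < 0 /\ 0 <= t j w) /\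
  ~ (exists i, i <> j /\ t j w - Delta < t i w /\ t i w <= t j w).

Definition honest_relabeled (T : Type) (R : realType) (X : nat -> T -> R) (Hm : nat -> set T)
  (Delta : R) (j : nat) : set T :=
  [set w | Hm j w /\ lagger X Delta j w].

Definition mutually_independent_events d (T : measurableType d) (R : realType)
  (P : probability T R) (I : eqType) (E : I -> set T) : Prop :=
  forall s : seq I, uniq s ->
    P (\big[setI/setT]_(i <- s) E i) = \big[*%E/1%E]_(i <- s) P (E i).

Definition mutually_independent d (T : measurableType d) (R : realType)
  (P : probability T R) (I : eqType) (Y : I -> T -> R) : Prop :=
  forall (s : seq I) (B : I -> set R), uniq s -> (forall i, measurable (B i)) ->
    P (\big[setI/setT]_(i <- s) (Y i @^-1` B i)) = \big[*%E/1%E]_(i <- s) P (Y i @^-1` B i).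

(* Node : type of honest nodes; has m i s : honest node m holds block i at time s. *)
Definition held_before (Node : Type) (R : realType) (has : Node -> nat -> R -> Prop)
  (m : Node) (t : R) (i : nat) : Prop :=
  exists s, s < t /\ has m i s.

(* h is the height of a longest chain in m's view just before t (genesis has height 0). *)
Definition longest_height (Node : Type) (R : realType) (hgt : nat -> nat)
  (has : Node -> nat -> R -> Prop) (m : Node) (t : R) (h : nat) : Prop :=
  (forall i, held_before has m t i -> (hgt i <= h)%N) /\
  (h = 0%N \/ exists i, held_before has m t i /\ hgt i = h).

(* t j : mining time of block j; hm j : block j mined by an honest node (miner j);
   hgt j : height of block j. *)
Definition execution (Node : Type) (R : realType) (t : nat -> R) (hm : nat -> Prop) (Delta : R)
  (miner : nat -> Node) (hgt : nat -> nat) (has : Node -> nat -> R -> Prop) : Prop :=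
  [/\
      (forall m i s s', has m i s -> s <= s' -> has m i s'),
      (* an honest block extends a longest chain in its miner's view just before t j *)
      (forall j, hm j -> exists h, longest_height hgt has (miner j) (t j) h /\ hgt j = h.+1),
      (forall j, hm j -> has (miner j) j (t j)),
      (* an honest node mining a new longest chain at time t: all honest nodes have it by t + Delta *)
      (forall j, hm j -> forall m', has m' j (t j + Delta)) &
      (* an honest node receiving a new longest chain at time s: all honest nodes have it by s + Delta *)
      (forall m i s, has m i s -> ~ held_before has m s i ->
         (forall i', held_before has m s i' -> (hgt i' < hgt i)%N) ->
         forall m', has m' i (s + Delta))].

Definition chain_claim (Node : Type) (R : realType) (t : nat -> R) (hon : nat -> Prop)
  (hgt : nat -> nat) (has : Node -> nat -> R -> Prop) : Prop :=
  [/\ (forall j k, hon j -> hon k -> (j < k)%N -> forall m, held_before has m (t k) j),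
      (forall j k, hon j -> hon k -> j <> k -> hgt j <> hgt k) &
      (forall (tau : R) j k, hon j -> hon k -> t j <= tau -> tau < t k -> (hgt j < hgt k)%N)].

(* Almost surely every inter-arrival time X j is positive and different from
   Delta.  Off that null set block j is a lagger iff X j > Delta, because the only
   block that can be mined in (t_j - Delta, t_j] is its predecessor (the genesis
   block for j = 0).  So the relabeled honest event of block j is
   {X j > Delta} /\ H_j up to a null set, and independence of the X j and the
   miner labels gives (i).  For (ii), an honest block k has X k > Delta, so every
   earlier honest block was mined more than Delta before t_k, has reached every
   honest node, and block k extends a chain at least as high as it. *)

From HB Require Import structures.
From mathcomp Require Import all_boot all_order all_algebra.
From mathcomp Require Import all_classical all_reals all_analysis.
From mathcomp Require Import zify lra.
Import Order.TTheory Order.NatMonotonyTheory GRing.Theory Num.Theory.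
Local Open Scope classical_set_scope.
Local Open Scope ring_scope.
Set Implicit Arguments. Unset Strict Implicit. Unset Printing Implicit Defensive.

Section mining_time.
Variables (T : Type) (R : realType) (X : nat -> T -> R) (w : T).

Local Notation t j := (mining_time X j w).

Lemma mining_time0 : t 0 = X 0%N w.
Proof. by rewrite /mining_time big_ord1. Qed.

Lemma mining_timeS j : t j.+1 = t j + X j.+1 w.
Proof. by rewrite /mining_time big_ord_recr. Qed.

Hypothesis X_gt0 : forall k, 0 < X k w.

Lemma mining_time_lt : {homo mining_time X ^~ w : i j / (i < j)%N >-> i < j}.
Proof. by apply: homo_ltn_lt => j; rewrite mining_timeS ltrDl. Qed.

Lemma mining_time_le : {homo mining_time X ^~ w : i j / (i <= j)%N >-> i <= j}.
Proof. exact/ltW_homo/mining_time_lt. Qed.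

Lemma mining_time_gt0 j : 0 < t j.
Proof. by rewrite (lt_le_trans _ (mining_time_le (leq0n j))) // mining_time0. Qed.

Lemma mining_time_ge j : X j w <= t j.
Proof.
by case: j => [|j]; rewrite ?mining_time0 // mining_timeS lerDr ltW ?mining_time_gt0.
Qed.

(* Since blocks are mined in order, the only candidate to spoil the lag window
   of block j is its predecessor (the genesis block if j = 0), at distance X j. *)
Lemma lagger_iff (Delta : R) j : (forall k, X k w <> Delta) ->
  lagger X Delta j w <-> Delta < X j w.
Proof.
move=> X_neqD; split.
- case=> no_genesis no_block; rewrite ltNge; apply/negP => XleD.
  have XltD : X j w < Delta by rewrite lt_neqAle XleD andbT; exact/eqP/X_neqD.
  case: j {XleD} XltD no_genesis no_block => [|j] XltD no_genesis no_block.
    by apply: no_genesis; rewrite mining_time0; split; [lra | exact/ltW].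
  apply: no_block; exists j; split; first lia.
  by rewrite mining_timeS; split; [lra | rewrite lerDl ltW].
- move=> DltX; split.
    by case=> /[swap] _; have := mining_time_ge j; lra.
  case=> i [neq_ij [lt_ti le_ti]].
  case: (ltngtP i j) => [lt_ij | lt_ji | _] //.
  + case: j DltX neq_ij lt_ti le_ti lt_ij => [//|j] DltX _ lt_ti _.
    rewrite ltnS => /mining_time_le.
    by move: lt_ti; rewrite mining_timeS; lra.
  + by have := mining_time_lt lt_ji; lra.
Qed.

End mining_time.

Section honest_chain.
Variables (T : Type) (R : realType) (X : nat -> T -> R) (Hm : nat -> set T).
Variables (Delta : R) (w : T) (Node : Type) (miner : nat -> Node).
Variables (hgt : nat -> nat) (has : Node -> nat -> R -> Prop).
Hypotheses (X_gt0 : forall k, 0 < X k w) (X_neqD : forall k, X k w <> Delta).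
Hypothesis exec :
  execution (fun j => mining_time X j w) (fun j => Hm j w) Delta miner hgt has.

Local Notation t j := (mining_time X j w).
Local Notation hon j := (honest_relabeled X Hm Delta j w).

(* Block k is a lagger, so block j < k was mined more than Delta before it and
   has already reached every honest node. *)
Lemma honest_held_before j k : hon j -> hon k -> (j < k)%N ->
  forall m, held_before has m (t k) j.
Proof.
case: exec => _ _ _ deliver _ [Hj _] [_ /(lagger_iff X_gt0 _ X_neqD) lag_k] lt_jk m.
exists (t j + Delta); split; last exact: deliver Hj m.
case: k lag_k lt_jk => [//|k] lag_k; rewrite ltnS => /(mining_time_le X_gt0).
by rewrite mining_timeS; lra.
Qed.

Lemma honest_hgt_lt j k : hon j -> hon k -> (j < k)%N -> (hgt j < hgt k)%N.
Proof.
move=> hon_j hon_k lt_jk; have [_ extend _ _ _] := exec.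
have [h [[longest _] ->]] := extend k hon_k.1.
by rewrite ltnS; apply/longest/honest_held_before.
Qed.

Lemma honest_chain_claim : chain_claim (fun j => t j) (fun j => hon j) hgt has.
Proof.
split; first exact: honest_held_before.
- move=> j k hon_j hon_k /eqP; rewrite neq_ltn => /orP[] lt.
    by have := honest_hgt_lt hon_j hon_k lt; lia.
  by have := honest_hgt_lt hon_k hon_j lt; lia.
- move=> tau j k hon_j hon_k le_tj lt_tk; apply: honest_hgt_lt => //.
  rewrite ltnNge; apply/negP => /(mining_time_le X_gt0); lra.
Qed.

End honest_chain.

Section measurable_comparison.
Context d (T : measurableType d) (R : realType) (f g : T -> R).
Hypotheses (mf : measurable_fun setT f) (mg : measurable_fun setT g).

Lemma measurable_set_ltr : measurable [set w | f w < g w].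
Proof.
have := measurable_realfun.measurable_fun_ltr mf mg measurableT (Y := [set true]) I.
by rewrite setTI; congr measurable; apply/seteqP.
Qed.

Lemma measurable_set_ler : measurable [set w | f w <= g w].
Proof.
have := measurable_realfun.measurable_fun_ler mf mg measurableT (Y := [set true]) I.
by rewrite setTI; congr measurable; apply/seteqP.
Qed.

Lemma measurable_set_eqr a : measurable [set w | f w = a].
Proof. by rewrite -[X in measurable X]setTI; exact: mf (measurable_set1 a). Qed.

End measurable_comparison.

Lemma measure_eq_off_null d (T : measurableType d) (R : realType)
    (mu : {measure set T -> \bar R}) (A B N : set T) :
  measurable A -> measurable B -> measurable N -> mu N = 0%E ->
  A `&` ~` N = B `&` ~` N -> mu A = mu B.
Proof.
move=> mA mB mN N0 AB.
have off_null E : measurable E -> mu E = mu (E `&` ~` N).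
  move=> mE; rewrite (measureDI mu mE mN) (@subset_measure0 _ _ _ mu (E `&` N) N) //.
  - by rewrite adde0.
  - exact: measurableI.
by rewrite (off_null A) // AB -off_null.
Qed.

Section exponential_tail.
Context d (T : measurableType d) (R : realType) (P : probability T R).
Variables (lambda : R) (Y : T -> R).
Hypotheses (lambda_gt0 : 0 < lambda) (mY : measurable_fun setT Y).
Hypothesis tail : forall x, 0 <= x -> P [set w | x < Y w] = (expR (- (lambda * x)))%:E.

Let measurable_tail x : measurable [set w | x < Y w].
Proof. exact: measurable_set_ltr (measurable_cst x) mY. Qed.

Let measurable_atom a : measurable [set w | Y w = a].
Proof. exact: measurable_set_eqr. Qed.

Lemma exp_tail_le0_null : P [set w | Y w <= 0] = 0%E.
Proof.
have -> : [set w | Y w <= 0] = ~` [set w | 0 < Y w].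
  by apply/seteqP; split => w /=; rewrite leNgt => /negP.
by rewrite probability_setC // tail // mulr0 oppr0 expR0 subee.
Qed.

(* [Y = a] lies in [a - e < Y] minus [a < Y], of probability
   e^{-lambda (a - e)} (1 - e^{-lambda e}) <= lambda e. *)
Lemma exp_tail_atom_le a e : 0 < e <= a -> (P [set w | Y w = a] <= (lambda * e)%:E)%E.
Proof.
case/andP=> e_gt0 e_le_a.
have : (P [set w | Y w = a] + P [set w | (a < Y w)%R] <= P [set w | (a - e < Y w)%R])%E.
  rewrite -measureU //; last by apply/seteqP; split => // w /= [->]; rewrite ltxx.
  apply: le_measure; rewrite ?inE //; first exact: measurableU.
  by move=> w /= [->|]; lra.
rewrite -(fineK (fin_num_measure P _ (measurable_atom a))).
have := fine_ge0 (measure_ge0 P [set w | Y w = a]).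
move: (fine _) => c c_ge0.
rewrite !tail ?subr_ge0 ?(le_trans (ltW e_gt0)) // -EFinD !lee_fin.
have -> : expR (- (lambda * a)) = expR (- (lambda * (a - e))) * expR (- (lambda * e)).
  by rewrite -expRD; congr expR; lra.
have le1 : expR (- (lambda * (a - e))) <= 1.
  by rewrite expR_le1 oppr_le0 mulr_ge0 ?subr_ge0 // ltW.
have := expR_ge0 (- (lambda * (a - e))); have := expR_ge1Dx (- (lambda * e)).
have : 0 <= lambda * e by rewrite mulr_ge0 // ltW.
nra.
Qed.

Lemma exp_tail_atom_null a : 0 <= a -> P [set w | Y w = a] = 0%E.
Proof.
rewrite le0r => /orP[/eqP-> | a_gt0].
  apply: (subset_measure0 _ _ _ exp_tail_le0_null) => [||w /= ->] //.
  exact/measurable_set_ler/measurable_cst.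
apply/eqP; rewrite eq_le measure_ge0 andbT.
apply/lee_addgt0Pr => e e_gt0; rewrite add0e.
pose e' := Num.min (e / lambda) a.
have e'_gt0 : 0 < e' by rewrite lt_min divr_gt0.
apply: (le_trans (exp_tail_atom_le (e := e') _)); first by rewrite e'_gt0 ge_min lexx orbT.
by rewrite lee_fin -ler_pdivlMl // ge_min mulrC lexx.
Qed.

End exponential_tail.

Lemma mutually_independent_pairs d (T : measurableType d) (R : realType)
    (P : probability T R) (Y : nat + nat -> T -> R) (B C : nat -> set R) (s : seq nat) :
  mutually_independent P Y -> (forall j, measurable (B j)) -> (forall j, measurable (C j)) ->
  uniq s ->
  P (\big[setI/setT]_(j <- s) (Y (inl j) @^-1` B j `&` Y (inr j) @^-1` C j)) =
  \big[*%E/1%E]_(j <- s) (P (Y (inl j) @^-1` B j) * P (Y (inr j) @^-1` C j))%E.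
Proof.
move=> indep mB mC uniq_s.
pose BC k := match k with inl j => B j | inr j => C j end.
have uniq_st : uniq (map inl s ++ map inr s).
  rewrite cat_uniq !map_inj_uniq ?uniq_s /=; try by move=> ? ? [].
  by rewrite andbT; apply/hasPn => _ /mapP[j _ ->]; apply/mapP => -[].
have mBC k : measurable (BC k) by case: k.
have := indep _ BC uniq_st mBC.
by rewrite !big_cat !big_map /= -!big_split.
Qed.

Section honest_blocks.
Context d (T : measurableType d) (R : realType) (P : probability T R).
Variables (lambda rho Delta : R) (X : nat -> T -> R) (Hm : nat -> set T).
Hypotheses (lambda_gt0 : 0 < lambda) (Delta_ge0 : 0 <= Delta).
Hypotheses (mX : forall j, measurable_fun setT (X j)) (mHm : forall j, measurable (Hm j)).
Hypothesis tail :
  forall j x, 0 <= x -> P [set w | x < X j w] = (expR (- (lambda * x)))%:E.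

Lemma gaps_regular_ae : exists N : set T, [/\ measurable N, P N = 0%E &
  forall w, ~ N w -> (forall k, 0 < X k w) /\ (forall k, X k w <> Delta)].
Proof.
have bad_null k : P.-negligible ([set w | X k w <= 0] `|` [set w | X k w = Delta]).
  apply: negligibleU; apply/negligibleP.
  - exact/measurable_set_ler/measurable_cst.
  - exact: exp_tail_le0_null (tail k).
  - exact: measurable_set_eqr.
  - exact: exp_tail_atom_null lambda_gt0 (mX k) (tail k) _ Delta_ge0.
have [N [mN N0 bad_N]] := negligible_bigcup bad_null.
exists N; split => // w Nw; split => k.
  by rewrite ltNge; apply/negP => le0; apply/Nw/bad_N; exists k => //; left.
by move=> eqD; apply/Nw/bad_N; exists k => //; right.
Qed.

Lemma measurable_mining_time j : measurable_fun setT (mining_time X j).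
Proof. exact: measurable_sum. Qed.

Lemma measurable_honest_relabeled j : measurable (honest_relabeled X Hm Delta j).
Proof.
pose t := mining_time X.
have mt i := measurable_mining_time i.
have mtD : measurable_fun setT (fun w => t j w - Delta).
  exact/measurable_realfun.measurable_funB/measurable_cst.
have -> : honest_relabeled X Hm Delta j = Hm j `&`
   ~` ([set w | t j w - Delta < 0] `&` [set w | 0 <= t j w]) `&`
   ~` (\bigcup_(i in [set i | i <> j])
        ([set w | t j w - Delta < t i w] `&` [set w | t i w <= t j w])).
  apply/seteqP; split => w /=.
    by move=> [Hw [no_genesis no_block]]; split=> // -[i ? ?]; apply: no_block; exists i.
  move=> [[Hw no_genesis] no_block]; split=> //; split=> // -[i [? ?]].
  by apply: no_block; exists i.
apply: measurableI; first apply: measurableI => //; apply: measurableC.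
  apply: measurableI; first exact: measurable_set_ltr mtD (measurable_cst _).
  exact: measurable_set_ler (measurable_cst _) (mt j).
apply: bigcup_measurable => i _.
by apply: measurableI; [exact: measurable_set_ltr | exact: measurable_set_ler].
Qed.

Hypothesis Hm_prob : forall j, P (Hm j) = rho%:E.
Hypothesis indep :
  mutually_independent P (fun k => match k with inl j => X j | inr j => \1_(Hm j) end).

Lemma prob_bigcap_gap_miner s : uniq s ->
  P (\big[setI/setT]_(j <- s) ([set w | Delta < X j w] `&` Hm j)) =
  \big[*%E/1%E]_(j <- s) (rho * expR (- (lambda * Delta)))%:E.
Proof.
move=> uniq_s.
have miner_preimage j : (\1_(Hm j) : T -> R) @^-1` [set 1] = Hm j.
  by rewrite preimage_indic mem_set // memNset // => /esym/eqP; rewrite oner_eq0.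
have mB (j : nat) : measurable (`]Delta, +oo[ : set R) by exact: measurable_itv.
have mC (j : nat) : measurable ([set 1] : set R) by exact: measurable_set1.
under eq_bigr do rewrite -preimage_itvoy -[Hm _]miner_preimage.
rewrite (mutually_independent_pairs indep mB mC uniq_s); apply: eq_bigr => j _.
by rewrite preimage_itvoy miner_preimage tail // Hm_prob -EFinM mulrC.
Qed.

Lemma prob_bigcap_honest_relabeled s : uniq s ->
  P (\big[setI/setT]_(j <- s) honest_relabeled X Hm Delta j) =
  \big[*%E/1%E]_(j <- s) (rho * expR (- (lambda * Delta)))%:E.
Proof.
move=> uniq_s; rewrite -prob_bigcap_gap_miner //.
have [N [mN N0 regular]] := gaps_regular_ae.
apply: (measure_eq_off_null _ _ mN N0).
- by apply: bigsetI_measurable => j _; exact: measurable_honest_relabeled.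
- apply: bigsetI_measurable => j _.
  exact: measurableI (measurable_set_ltr (measurable_cst _) (mX j)) (mHm j).
have honest_off_null j :
    honest_relabeled X Hm Delta j `&` ~` N = [set w | Delta < X j w] `&` Hm j `&` ~` N.
  apply/seteqP; split => w [hon_w Nw]; split => //; have [X_gt0 X_neqD] := regular w Nw.
  - by case: hon_w => Hw /(lagger_iff X_gt0 _ X_neqD).
  - by case: hon_w => lt_DX Hw; split; last exact/(lagger_iff X_gt0 _ X_neqD).
elim: (s) => [|j s' IH]; rewrite ?big_nil // !big_cons.
by rewrite setIIl IH honest_off_null -setIIl.
Qed.

End honest_blocks.

Theorem mainTheorem8 (R : realType) (d : measure_display) (T : measurableType d)
  (P : probability T R) (lambda rho Delta : R) (X : nat -> T -> R) (Hm : nat -> set T) :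
  0 < lambda -> 0 <= rho <= 1 -> 0 <= Delta ->
  (forall j, measurable_fun setT (X j)) ->
  (forall j, measurable (Hm j)) ->
  (forall j (x : R), 0 <= x -> P [set w | x < X j w] = (expR (- (lambda * x)))%:E) ->
  (forall j, P (Hm j) = rho%:E) ->
  mutually_independent P
    (fun k : nat + nat => match k with inl j => X j | inr j => \1_(Hm j) end) ->
  (mutually_independent_events P (honest_relabeled X Hm Delta) /\
   forall j, P (honest_relabeled X Hm Delta j) = (rho * expR (- (lambda * Delta)))%:E)
  /\
  exists N : set T, measurable N /\ P N = 0%E /\
    forall w, ~ N w ->
    forall (Node : Type) (miner : nat -> Node) (hgt : nat -> nat)
           (has : Node -> nat -> R -> Prop),
      execution (fun j => mining_time X j w) (fun j => Hm j w) Delta miner hgt has ->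
      chain_claim (fun j => mining_time X j w) (fun j => honest_relabeled X Hm Delta j w)
        hgt has.
Proof.
move=> lambda_gt0 _ Delta_ge0 mX mHm tail Hm_prob indep.
have prob_bigcap := prob_bigcap_honest_relabeled lambda_gt0 Delta_ge0 mX mHm tail Hm_prob indep.
have prob_honest j : P (honest_relabeled X Hm Delta j) = (rho * expR (- (lambda * Delta)))%:E.
  by have := prob_bigcap [:: j] erefl; rewrite !big_seq1.
split.
  split=> // s uniq_s; rewrite prob_bigcap //.
  by apply: eq_bigr => j _; rewrite prob_honest.
have [N [mN N0 regular]] := gaps_regular_ae lambda_gt0 Delta_ge0 mX tail.
exists N; split=> //; split=> // w Nw Node miner hgt has.
by have [X_gt0 X_neqD] := regular w Nw; exact: honest_chain_claim.
Qed.
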